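(* Let $S$ be a semigroup with a regular element $a$, and let $b\in S$ satisfy $a=aba$. Then for any set $U\subseteq S$ with $S=US^1$ we have $\mathbf{r}_S(a)=\langle\{(bau,u)\mid u\in U\}\rangle$. Consequently, $\mathbf{r}_S(a)$ is finitely generated if and only if $S=US^1$ for some finite set $U\subseteq S$.
   Context: $S^1$ is $S$ if $S$ is a monoid and otherwise $S$ with an identity adjoined. $\mathbf{r}_S(a)=\{(s,t)\in S\times S\mid as=at\}$. For $X\subseteq S\times S$, $\langle X\rangle$ denotes the smallest right congruence on $S$ containing $X$; a right congruence is finitely generated if it equals $\langle X\rangle$ for some finite $X$. *)

(* A semigroup is a carrier type S with an associative
   binary operation mul (associativity is a hypothesis of the theorem). *)
From Stdlib Require Import List.
Set Implicit Arguments.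

Section Semigroup.
Variable S : Type.
Variable mul : S -> S -> S.

Definition associative_op : Prop :=
  forall x y z, mul x (mul y z) = mul (mul x y) z.

Definition regular (a : S) : Prop := exists x, a = mul (mul a x) a.

Definition rann (a : S) (s t : S) : Prop := mul a s = mul a t.

Definition right_congruence (R : S -> S -> Prop) : Prop :=
  (forall s, R s s) /\
  (forall s t, R s t -> R t s) /\
  (forall s t u, R s t -> R t u -> R s u) /\
  (forall s t c, R s t -> R (mul s c) (mul t c)).

Definition gen_rcong (X : S -> S -> Prop) (s t : S) : Prop :=
  forall R, right_congruence R -> (forall p q, X p q -> R p q) -> R s t.

Definition rel_eq (R1 R2 : S -> S -> Prop) : Prop :=
  forall s t, R1 s t <-> R2 s t.

Definition fin_gen (R : S -> S -> Prop) : Prop :=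
  exists l : list (S * S), rel_eq R (gen_rcong (fun p q => In (p, q) l)).

(* S = U S^1 : every s is u or u t with u in U, t in S *)
Definition covers_US1 (U : S -> Prop) : Prop :=
  forall s, exists u, U u /\ (s = u \/ exists t, s = mul u t).

End Semigroup.

(* Put e := b a.  Since a e = a, every pair (e s, s) lies in r(a), and
   conversely a s = a t forces e s = e t.  If S = U S^1, each s is u or u c
   with u in U, so the pairs (e u, u) already give (e s, s) by right
   compatibility, and r(a) is generated by them.  For the converse, a finite
   generating set of r(a) lies in the right ideal I generated by its finitely
   many components together with b; the Rees right congruence of I then
   contains r(a), and the pair (e s, s) shows that s lies in I or s = b (a s). *)
From Stdlib Require Import List.

Set Implicit Arguments.

Section RightAnnihilator.
Variable S : Type.
Variable mul : S -> S -> S.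
Hypothesis mulA : associative_op mul.

Definition in_US1 (U : S -> Prop) (x : S) : Prop :=
  exists u, U u /\ (x = u \/ exists t, x = mul u t).

Lemma in_US1_mulr U x c : in_US1 U x -> in_US1 U (mul x c).
Proof.
  intros [u [Uu [-> | [t ->]]]]; exists u; split; auto; right.
  - exists c; reflexivity.
  - exists (mul t c); rewrite mulA; reflexivity.
Qed.

Lemma in_US1_base U u : U u -> in_US1 U u.
Proof. intros Uu; exists u; auto. Qed.

Lemma gen_rcong_mono (X Y : S -> S -> Prop) :
  (forall p q, X p q -> Y p q) ->
  forall s t, gen_rcong mul X s t -> gen_rcong mul Y s t.
Proof. intros XY s t G R HR HY; apply G; auto. Qed.

Lemma rann_right_congruence a : right_congruence mul (rann mul a).
Proof.
  unfold rann; repeat split.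
  - intros s t H; auto.
  - intros s t u H1 H2; congruence.
  - intros s t c H; rewrite !mulA, H; reflexivity.
Qed.

Lemma rees_right_congruence (I : S -> Prop) :
  (forall x c, I x -> I (mul x c)) ->
  right_congruence mul (fun x y => x = y \/ (I x /\ I y)).
Proof.
  intros Imulr; repeat split.
  - auto.
  - intros x y [-> | []]; auto.
  - intros x y z [-> | []] [-> | []]; auto.
  - intros x y c [-> | []]; auto.
Qed.

Variables a b : S.
Hypothesis aba : a = mul (mul a b) a.

Lemma rann_mul_ba s : rann mul a (mul (mul b a) s) s.
Proof. unfold rann; rewrite !mulA, <- aba; reflexivity. Qed.

Definition ba_pairs (U : S -> Prop) (p q : S) : Prop :=
  exists u, U u /\ p = mul (mul b a) u /\ q = u.

Lemma rann_eq_gen_ba_pairs U :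
  covers_US1 mul U -> rel_eq (rann mul a) (gen_rcong mul (ba_pairs U)).
Proof.
  intros HU s t; split.
  - intros Hst R [Rrefl [Rsym [Rtrans Rmulr]]] HX.
    assert (R_ba : forall x, R x (mul (mul b a) x)).
    { intros x; destruct (HU x) as [u [Uu [-> | [c ->]]]].
      - apply Rsym, HX; exists u; auto.
      - apply Rsym; rewrite mulA; apply Rmulr, HX; exists u; auto. }
    assert (E : mul (mul b a) s = mul (mul b a) t).
    { rewrite <- !mulA; unfold rann in Hst; rewrite Hst; reflexivity. }
    apply Rtrans with (mul (mul b a) s); [apply R_ba | rewrite E; apply Rsym, R_ba].
  - intros G; apply G; [apply rann_right_congruence |].
    intros p q [u [_ [-> ->]]]; apply rann_mul_ba.
Qed.

Lemma covers_fin_gen_rann :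
  (exists l : list S, covers_US1 mul (fun u => In u l)) ->
  fin_gen mul (rann mul a).
Proof.
  intros [l Hl]; exists (map (fun u => (mul (mul b a) u, u)) l).
  intros s t; rewrite (rann_eq_gen_ba_pairs Hl s t).
  split; apply gen_rcong_mono.
  - intros p q [u [Hu [-> ->]]]; apply in_map_iff; exists u; auto.
  - intros p q Hin; apply in_map_iff in Hin.
    destruct Hin as [u [E Hu]]; injection E as <- <-; exists u; auto.
Qed.

Definition components (l : list (S * S)) : list S :=
  b :: flat_map (fun pq => fst pq :: snd pq :: nil) l.

Lemma fin_gen_rann_covers :
  fin_gen mul (rann mul a) ->
  exists l : list S, covers_US1 mul (fun u => In u l).
Proof.
  intros [l Hl]; exists (components l); intros s.
  set (I := in_US1 (fun u => In u (components l))).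
  assert (gen_in_I : forall p q, In (p, q) l -> p = q \/ (I p /\ I q)).
  { intros p q Hpq; right; split; apply in_US1_base; right;
      apply in_flat_map; exists (p, q); simpl; auto. }
  destruct (proj1 (Hl _ _) (rann_mul_ba s) _
              (rees_right_congruence I (fun x c => in_US1_mulr c)) gen_in_I)
    as [E | [_ Is]].
  - exists b; split; [left; reflexivity |].
    right; exists (mul a s); rewrite mulA; symmetry; exact E.
  - exact Is.
Qed.

End RightAnnihilator.

Theorem mainTheorem12 (S : Type) (mul : S -> S -> S)
  (Hassoc : associative_op mul) (a b : S)
  (Hreg : regular mul a) (Hb : a = mul (mul a b) a) :
  (forall U : S -> Prop, covers_US1 mul U ->
     rel_eq (rann mul a)
       (gen_rcong mul (fun p q => exists u, U u /\ p = mul (mul b a) u /\ q = u)))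
  /\
  (fin_gen mul (rann mul a) <->
     exists l : list S, covers_US1 mul (fun u => In u l)).
Proof.
  (* [Hreg] is redundant: [Hb] already witnesses that [a] is regular. *)
  split; [exact (rann_eq_gen_ba_pairs Hassoc b Hb) |].
  split; [exact (fin_gen_rann_covers Hassoc b Hb) |].
  exact (covers_fin_gen_rann Hassoc b Hb).
Qed.
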